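(* Let $N,M\ge 1$, let $\varrho_0$ be a density operator on $\mathbb{C}^N\otimes\mathbb{C}^M$, let $p\in[0,1]$, let $\tau$ be any density operator on $\mathbb{C}^N\otimes\mathbb{C}^M$, and define the noise channel $D_p^\tau(\varrho):=p\,\tau\,\mathrm{Tr}(\varrho)+(1-p)\varrho$. For $x\in\{1,\ldots,N\}$ let $\widehat{O}_x$ be the oracle channel on $\mathcal{B}(\mathbb{C}^N\otimes\mathbb{C}^M)$ given by $\widehat{O}_x(|y\rangle\langle y'|\otimes\sigma)=(-1)^{\delta_{xy}+\delta_{xy'}}|y\rangle\langle y'|\otimes\sigma$. Let $k\ge1$ and let $T_1,T_1',\ldots,T_k,T_k'$ be arbitrary quantum channels (completely positive trace-preserving maps) on $\mathcal{B}(\mathbb{C}^N\otimes\mathbb{C}^M)$, not depending on $x$, and set $$\varrho_k^x=T_k'\widehat{O}_xT_kD_p^\tau\cdots D_p^\tau T_2'\widehat{O}_xT_2D_p^\tau T_1'\widehat{O}_xT_1D_p^\tau(\varrho_0).$$ Let $(E_y)_{y=1}^N$ be any POVM on $\mathbb{C}^N\otimes\mathbb{C}^M$. Then the average success probability $p_s:=\sum_{x=1}^N\frac1N\mathrm{Tr}[\varrho_k^xE_x]$ satisfies $$p_s\le\frac1N+\frac{8}{Np^2}\qquad\text{and}\qquad p_s\le 8\,\frac{k+1}{Np}.$$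
   Context: The $T_i,T_i'$ need not be unital. Composition of maps is written by juxtaposition. *)

(* Quantum operators on C^N (x) C^M are represented as
   matrices 'M[C]_(N * M); the basis vector |y> (x) |a> (y : 'I_N, a : 'I_M)
   is the index y * M + a (Kronecker convention, cf. real_closed.mxtens). *)
From HB Require Import structures.
From mathcomp Require Import all_boot all_order all_algebra.
From mathcomp Require Import complex mxtens.
Set Implicit Arguments.
Unset Strict Implicit.
Unset Printing Implicit Defensive.
Import Order.TTheory GRing.Theory Num.Theory.
Local Open Scope ring_scope.

Section Quantum.
Variable C : numClosedFieldType.

Definition adjmx m n (A : 'M[C]_(m, n)) : 'M[C]_(n, m) := (map_mx Num.conj A)^T.

(* positive semidefinite operator: <v, A v> >= 0 for every vector v
   (over C, this forces <v, A v> to be real, hence A hermitian) *)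
Definition psdmx n (A : 'M[C]_n) : Prop :=
  forall v : 'cV[C]_n, 0 <= (adjmx v *m A *m v) 0 0.

Definition density n (rho : 'M[C]_n) : Prop := psdmx rho /\ \tr rho = 1.

Definition linear_map n (T : 'M[C]_n -> 'M[C]_n) : Prop :=
  forall (a : C) (A B : 'M[C]_n), T (a *: A + B) = a *: T A + T B.

(* (id_k (x) T) acting on 'M_(k * n) = B(C^k (x) C^n), blockwise *)
Definition ampliate k n (T : 'M[C]_n -> 'M[C]_n) (X : 'M[C]_(k * n))
  : 'M[C]_(k * n) :=
  \matrix_(p, q)
    (T (\matrix_(i, j) X (mxtens_index ((mxtens_unindex p).1, i))
                         (mxtens_index ((mxtens_unindex q).1, j))))
      (mxtens_unindex p).2 (mxtens_unindex q).2.

Definition completely_positive n (T : 'M[C]_n -> 'M[C]_n) : Prop :=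
  forall k (X : 'M[C]_(k * n)), psdmx X -> psdmx (ampliate T X).

Definition trace_preserving n (T : 'M[C]_n -> 'M[C]_n) : Prop :=
  forall A, \tr (T A) = \tr A.

Definition channel n (T : 'M[C]_n -> 'M[C]_n) : Prop :=
  [/\ linear_map T, completely_positive T & trace_preserving T].

Definition povm (I : finType) n (E : I -> 'M[C]_n) : Prop :=
  (forall i, psdmx (E i)) /\ \sum_(i : I) E i = 1%:M.

Definition noise n (p : C) (tau : 'M[C]_n) (rho : 'M[C]_n) : 'M[C]_n :=
  p *: (\tr rho *: tau) + (1 - p) *: rho.

Definition oracle N M (x : 'I_N) (A : 'M[C]_(N * M)) : 'M[C]_(N * M) :=
  \matrix_(i, j)
    ((-1) ^+ ((mxtens_unindex i).1 == x) * (-1) ^+ ((mxtens_unindex j).1 == x)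
     * A i j).

(* rho_k^x = T'_k O_x T_k D ... T'_1 O_x T_1 D (rho_0);
   the channels T_{j+1}, T'_{j+1} are T j, T' j *)
Fixpoint evolve N M (p : C) (tau rho0 : 'M[C]_(N * M))
  (T T' : nat -> 'M[C]_(N * M) -> 'M[C]_(N * M)) (x : 'I_N) (k : nat)
  : 'M[C]_(N * M) :=
  match k with
  | 0 => rho0
  | j.+1 => T' j (oracle x (T j (noise p tau (evolve p tau rho0 T T' x j))))
  end.

Definition success_prob N M (p : C) (tau rho0 : 'M[C]_(N * M))
  (T T' : nat -> 'M[C]_(N * M) -> 'M[C]_(N * M)) (k : nat)
  (E : 'I_N -> 'M[C]_(N * M)) : C :=
  \sum_(x < N) N%:R^-1 * \tr (evolve p tau rho0 T T' x k *m E x).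

End Quantum.

(* Expanding every noise step D = p tau Tr + (1 - p) id writes rho_k^x as the
   noiseless run of all k oracle calls from rho_0, with weight (1-p)^k, plus,
   for each i < k, the noiseless run of the last i+1 oracle calls from tau,
   with weight p (1-p)^i.
   For a noiseless run of m >= 1 calls we use the hybrid argument: the run
   with oracle O_x is coupled with the oracle-free run through a positive
   2 x 2 block matrix, and the squared distance D_x of the two runs is at most
   4m sum_t w_x(t), where w_x(t) is the weight the free run puts on the block
   of x before call t.  As sum_x w_x(t) = 1, sum_x D_x <= 4m^2, and splitting
   Tr(rho^x E_x) into the free run and the difference gives a summed success
   probability of at most (1 + 2m) + (1 + 1/(2m)) 4m^2 = (1 + 2m)^2.
   Hence N p_s <= 1 + 8 sum_{i<k} (i+1) (1-p)^i, which is at most 1 + 8/p^2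
   and at most 8 (k+1)/p. *)
From HB Require Import structures.
From mathcomp Require Import all_boot all_order all_algebra.
From mathcomp Require Import complex mxtens spectral ring.
Import Order.TTheory GRing.Theory Num.Theory.
Local Open Scope ring_scope.
Set Implicit Arguments.
Unset Strict Implicit.
Unset Printing Implicit Defensive.

Section Adjoint.
Variable C : numClosedFieldType.

Lemma adjmxE m n (A : 'M[C]_(m, n)) i j : adjmx A i j = (A j i)^*.
Proof. by rewrite /adjmx !mxE. Qed.

Lemma adjmxK m n (A : 'M[C]_(m, n)) : adjmx (adjmx A) = A.
Proof. by apply/matrixP=> i j; rewrite !adjmxE conjCK. Qed.

Lemma adjmxM m n p (A : 'M[C]_(m, n)) (B : 'M[C]_(n, p)) :
  adjmx (A *m B) = adjmx B *m adjmx A.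
Proof.
apply/matrixP=> i j; rewrite adjmxE !mxE rmorph_sum; apply: eq_bigr => k _.
by rewrite !adjmxE rmorphM mulrC.
Qed.

Lemma adjmxD m n (A B : 'M[C]_(m, n)) : adjmx (A + B) = adjmx A + adjmx B.
Proof. by apply/matrixP=> i j; rewrite !(adjmxE, mxE) rmorphD. Qed.

Lemma adjmxN m n (A : 'M[C]_(m, n)) : adjmx (- A) = - adjmx A.
Proof. by apply/matrixP=> i j; rewrite !(adjmxE, mxE) rmorphN. Qed.

Lemma adjmxZ m n a (A : 'M[C]_(m, n)) : adjmx (a *: A) = a^* *: adjmx A.
Proof. by apply/matrixP=> i j; rewrite !(adjmxE, mxE) rmorphM. Qed.

Lemma adjmx0 m n : adjmx (0 : 'M[C]_(m, n)) = 0.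
Proof. by apply/matrixP=> i j; rewrite !(adjmxE, mxE) rmorph0. Qed.

Lemma adjmx1 n : adjmx (1%:M : 'M[C]_n) = 1%:M.
Proof. by apply/matrixP=> i j; rewrite !(adjmxE, mxE) eq_sym rmorph_nat. Qed.

Lemma adjmx_diag n (d : 'rV[C]_n) : adjmx (diag_mx d) = diag_mx (map_mx Num.conj d).
Proof.
apply/matrixP=> i j; rewrite adjmxE !mxE eq_sym.
by case: eqP => [->|_]; rewrite ?mulr1n ?mulr0n ?rmorph0.
Qed.

Lemma psdmx_conj m n (Y : 'M[C]_n) (B : 'M[C]_(m, n)) :
  psdmx Y -> psdmx (B *m Y *m adjmx B).
Proof. by move=> hY v; have := hY (adjmx B *m v); rewrite adjmxM adjmxK !mulmxA. Qed.

Lemma conj_psdmx_diag_ge0 m n (Y : 'M[C]_m) (F : 'M[C]_(n, m)) i :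
  psdmx Y -> 0 <= (F *m Y *m adjmx F) i i.
Proof.
move=> hY; have := hY (adjmx (row i F)); rewrite adjmxK.
suff -> : (F *m Y *m adjmx F) i i = (row i F *m Y *m adjmx (row i F)) 0 0 by [].
rewrite !mxE; apply: eq_bigr => k _; rewrite !adjmxE !mxE.
by congr (_ * _); apply: eq_bigr => l _; rewrite !mxE.
Qed.

Lemma mxtrace_conj_psdmx_ge0 m n (Y : 'M[C]_m) (F : 'M[C]_(n, m)) :
  psdmx Y -> 0 <= \tr (F *m Y *m adjmx F).
Proof. by move=> hY; apply: sumr_ge0 => i _; exact: conj_psdmx_diag_ge0. Qed.

Lemma delta_formE n (E : 'M[C]_n) a b :
  (adjmx (delta_mx a 0 : 'cV[C]_n) *m E *m (delta_mx b 0 : 'cV[C]_n)) 0 0 = E a b.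
Proof.
have -> : adjmx (delta_mx a 0 : 'cV[C]_n) = delta_mx 0 a.
  by apply/matrixP=> i j; rewrite adjmxE !mxE andbC rmorph_nat.
by rewrite -rowE -colE !mxE.
Qed.

Lemma psdmx_herm n (E : 'M[C]_n) : psdmx E -> adjmx E = E.
Proof.
move=> hE; apply/matrixP=> i j; rewrite adjmxE.
pose u z : 'cV[C]_n := delta_mx i 0 + z *: delta_mx j 0.
have formE z : (adjmx (u z) *m E *m u z) 0 0 =
    E i i + z * E i j + z^* * E j i + z^* * z * E j j.
  rewrite adjmxD adjmxZ !mulmxDl !mulmxDr -!scalemxAl -!scalemxAr.
  rewrite ![((_ + _)%R : 'M_1) 0 0]mxE ![((_ *: _)%R : 'M_1) 0 0]mxE.
  by rewrite !delta_formE; ring.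
have diag_real a : E a a \is Num.real.
  by rewrite -delta_formE; apply/ger0_real/hE.
(* The forms at [u 1] and [u 'i] are real, which forces [b = 0]. *)
pose b := E i j - (E j i)^*.
have selfconj z : z * b = (z * b)^*.
  have := conj_Creal (ger0_real (hE (u z))); rewrite formE.
  rewrite !(rmorphD, rmorphM) /=.
  rewrite conjCK !(conj_Creal (diag_real _)) /b => h.
  rewrite [(- _)^*]rmorphN /= conjCK; apply/eqP; rewrite -subr_eq0; apply/eqP.
  rewrite -[RHS](subrr (E i i + z * E i j + z^* * E j i + z^* * z * E j j)) -{2}h.
  by ring.
have b0 : b = 0.
  have h1 := selfconj 1; have hi := selfconj 'i.
  rewrite !mul1r in h1; rewrite rmorphM /= conjCi -h1 in hi.
  have : 'i * b *+ 2 = 0 by rewrite mulr2n {1}hi mulNr addNr.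
  by move/eqP; rewrite mulrn_eq0 /= mulf_eq0 (negbTE (neq0Ci C)) => /eqP.
by move/eqP: b0; rewrite subr_eq0 => /eqP ->.
Qed.

Lemma trmxC_adjmx m n (A : 'M[C]_(m, n)) : (A ^t*)%sesqui = adjmx A.
Proof. by rewrite /adjmx map_trmx. Qed.

Lemma psdmx_factor n (E : 'M[C]_n) : psdmx E -> exists F : 'M[C]_n, E = adjmx F *m F.
Proof.
move=> hE; have hN : E \is normalmx by apply/normalmxP; rewrite trmxC_adjmx psdmx_herm.
have := orthomx_spectralP hN.
set P := spectralmx E; set d := spectral_diag E => hEd.
have hU : P \is unitarymx by apply: spectral_unitarymx.
have hPP : P *m adjmx P = 1%:M by rewrite -trmxC_adjmx; apply/unitarymxP.
rewrite invmx_unitary // trmxC_adjmx in hEd.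
have hd i : 0 <= d 0 i.
  have := conj_psdmx_diag_ge0 P i hE.
  by rewrite hEd !mulmxA hPP mul1mx -mulmxA hPP mulmx1 mxE eqxx mulr1n.
exists (diag_mx (map_mx sqrtC d) *m P).
rewrite adjmxM adjmx_diag !mulmxA -[adjmx P *m _ *m _]mulmxA mulmx_diag.
rewrite hEd; congr (_ *m _ *m _); congr diag_mx; apply/matrixP=> i j.
by rewrite !mxE ord1 conj_Creal ?ger0_real ?sqrtC_ge0 ?hd // -expr2 sqrtCK.
Qed.

End Adjoint.

Section TraceForm.
Variables (C : numClosedFieldType) (m r : nat) (Y : 'M[C]_m).

Definition trform (X Z : 'M[C]_(r, m)) := \tr (X *m Y *m adjmx Z).

Lemma trformDl X1 X2 Z : trform (X1 + X2) Z = trform X1 Z + trform X2 Z.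
Proof. by rewrite /trform !mulmxDl mxtraceD. Qed.

Lemma trformDr X Z1 Z2 : trform X (Z1 + Z2) = trform X Z1 + trform X Z2.
Proof. by rewrite /trform adjmxD mulmxDr mxtraceD. Qed.

Lemma trformZl a X Z : trform (a *: X) Z = a * trform X Z.
Proof. by rewrite /trform -!scalemxAl mxtraceZ. Qed.

Lemma trformZr a X Z : trform X (a *: Z) = a^* * trform X Z.
Proof. by rewrite /trform adjmxZ -scalemxAr mxtraceZ. Qed.

Lemma trformNl X Z : trform (- X) Z = - trform X Z.
Proof. by rewrite -scaleN1r trformZl mulN1r. Qed.

Lemma trformNr X Z : trform X (- Z) = - trform X Z.
Proof. by rewrite -scaleN1r trformZr conjCN1 mulN1r. Qed.

Lemma trform_add_le (l : C) X Z : psdmx Y -> 0 < l ->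
  trform (X + Z) (X + Z) <= (1 + l) * trform X X + (1 + l^-1) * trform Z Z.
Proof.
move=> hY hl; have lr : l^* = l by apply/conj_Creal/gtr0_real.
have := mxtrace_conj_psdmx_ge0 (l *: X - Z) hY.
rewrite -/(trform _ _) !(trformDl, trformDr, trformNl, trformNr, trformZl, trformZr) lr.
move=> h0; rewrite -subr_ge0.
have -> : (1 + l) * trform X X + (1 + l^-1) * trform Z Z -
    (trform X X + trform X Z + (trform Z X + trform Z Z)) =
  l^-1 * (l * (l * trform X X - trform X Z) - (l * trform Z X - trform Z Z)).
  by field; rewrite gt_eqF.
by rewrite mulr_ge0 // invr_ge0 ltW.
Qed.

End TraceForm.

Section Blocks.
Variables (C : numClosedFieldType) (n : nat).
Local Notation b0 := (@Ordinal 2 0 isT).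
Local Notation b1 := (@Ordinal 2 1 isT).

Definition idx2 (a : 'I_2) (i : 'I_n) : 'I_(2 * n) := mxtens_index (a, i).

Lemma idx2K a i : mxtens_unindex (idx2 a i) = (a, i).
Proof. exact: mxtens_indexK. Qed.

Lemma sum_idx2 (F : 'I_(2 * n) -> C) :
  \sum_(p < 2 * n) F p = \sum_(i < n) F (idx2 b0 i) + \sum_(i < n) F (idx2 b1 i).
Proof.
have -> : \sum_(p < 2 * n) F p = \sum_(u : 'I_2 * 'I_n) F (mxtens_index u).
  apply: reindex => /=; exists (@mxtens_unindex 2 n) => u _;
  by rewrite (mxtens_indexK, mxtens_unindexK).
transitivity (\sum_(a < 2) \sum_(i < n) F (mxtens_index (a, i))).
  by rewrite pair_bigA; apply: eq_bigr => -[].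
rewrite big_ord_recl big_ord_recl big_ord0 addr0.
congr (_ + _); apply: eq_bigr => i _;
  by congr F; congr mxtens_index; congr (_, _); apply: val_inj.
Qed.

Definition blk (a b : 'I_2) (Y : 'M[C]_(2 * n)) : 'M[C]_n :=
  \matrix_(i, j) Y (idx2 a i) (idx2 b j).

Definition blk_row (a : 'I_2) (Y : 'M[C]_(2 * n)) : 'M[C]_(n, 2 * n) :=
  \matrix_(i, q) Y (idx2 a i) q.

Definition row2 r (A0 A1 : 'M[C]_(r, n)) : 'M[C]_(r, 2 * n) :=
  \matrix_(i, p) (if (mxtens_unindex p).1 == b0 then A0 else A1) i
                   (mxtens_unindex p).2.

Definition diag2 (d0 d1 : 'rV[C]_n) : 'M[C]_(2 * n) :=
  diag_mx (\row_p (if (@mxtens_unindex 2 n p).1 == b0 then d0 else d1) 0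
                    (@mxtens_unindex 2 n p).2).

Definition dupmx (X : 'M[C]_n) : 'M[C]_(2 * n) :=
  adjmx (row2 1%:M 1%:M) *m X *m row2 1%:M 1%:M.

Lemma row2E0 r (A0 A1 : 'M[C]_(r, n)) i k : row2 A0 A1 i (idx2 b0 k) = A0 i k.
Proof. by rewrite mxE idx2K. Qed.

Lemma row2E1 r (A0 A1 : 'M[C]_(r, n)) i k : row2 A0 A1 i (idx2 b1 k) = A1 i k.
Proof. by rewrite mxE idx2K. Qed.

Lemma row2D r (A0 A1 B0 B1 : 'M[C]_(r, n)) :
  row2 (A0 + B0) (A1 + B1) = row2 A0 A1 + row2 B0 B1.
Proof. by apply/matrixP=> i p; rewrite !mxE; case: ifP; rewrite mxE. Qed.

Lemma mulmx_row2 m r (B : 'M[C]_(m, r)) (A0 A1 : 'M[C]_(r, n)) :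
  B *m row2 A0 A1 = row2 (B *m A0) (B *m A1).
Proof.
apply/matrixP=> i p; rewrite !mxE; under eq_bigr => k _ do rewrite mxE.
by case: ifP => _; rewrite mxE.
Qed.

Lemma row2_mulmx r (A0 A1 : 'M[C]_(r, n)) (Y : 'M[C]_(2 * n)) :
  row2 A0 A1 *m Y = A0 *m blk_row b0 Y + A1 *m blk_row b1 Y.
Proof.
apply/matrixP=> i q; rewrite !mxE sum_idx2; congr (_ + _);
  by apply: eq_bigr => k _; rewrite ?row2E0 ?row2E1 mxE.
Qed.

Lemma blk_row_mul_adj (a : 'I_2) r (B0 B1 : 'M[C]_(r, n)) (Y : 'M[C]_(2 * n)) :
  blk_row a Y *m adjmx (row2 B0 B1) = blk a b0 Y *m adjmx B0 + blk a b1 Y *m adjmx B1.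
Proof.
apply/matrixP=> k j; rewrite !mxE sum_idx2; congr (_ + _);
  by apply: eq_bigr => l _; rewrite !adjmxE ?row2E0 ?row2E1 !mxE.
Qed.

Lemma row2_mulmx_adj r (A0 A1 B0 B1 : 'M[C]_(r, n)) (Y : 'M[C]_(2 * n)) :
  row2 A0 A1 *m Y *m adjmx (row2 B0 B1) =
  A0 *m blk b0 b0 Y *m adjmx B0 + A0 *m blk b0 b1 Y *m adjmx B1 +
  A1 *m blk b1 b0 Y *m adjmx B0 + A1 *m blk b1 b1 Y *m adjmx B1.
Proof.
by rewrite row2_mulmx mulmxDl -!mulmxA !blk_row_mul_adj !mulmxDr !mulmxA addrA.
Qed.

Lemma row2_mul_diag2 r (A0 A1 : 'M[C]_(r, n)) d0 d1 :
  row2 A0 A1 *m diag2 d0 d1 = row2 (A0 *m diag_mx d0) (A1 *m diag_mx d1).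
Proof.
apply/matrixP=> i p; rewrite /diag2 !mul_mx_diag !mxE.
by case: ifP => _; rewrite mxE.
Qed.

Lemma blk_diag2_conj d0 d1 Y a b :
  blk a b (diag2 d0 d1 *m Y *m adjmx (diag2 d0 d1)) =
  diag_mx (if a == b0 then d0 else d1) *m blk a b Y *m
    adjmx (diag_mx (if b == b0 then d0 else d1)).
Proof.
rewrite /diag2 !adjmx_diag !mul_mx_diag !mul_diag_mx.
by apply/matrixP=> i j; rewrite !mxE !idx2K; case: ifP; case: ifP.
Qed.

Lemma blk_ampliate (T : 'M[C]_n -> 'M[C]_n) (Y : 'M[C]_(2 * n)) a b :
  blk a b (ampliate T Y) = T (blk a b Y).
Proof. by apply/matrixP=> i j; rewrite /blk /ampliate !mxE /idx2 !mxtens_indexK. Qed.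

Lemma blk_dupmx X a b : blk a b (dupmx X) = X.
Proof.
have row2E r (A : 'M[C]_(r, n)) i c k : row2 A A i (idx2 c k) = A i k.
  by rewrite mxE idx2K; case: ifP.
transitivity (adjmx 1%:M *m X *m 1%:M); last by rewrite adjmx1 mul1mx mulmx1.
apply/matrixP=> i j; rewrite !mxE; apply: eq_bigr => q _; rewrite row2E; congr (_ * _).
by rewrite !mxE; apply: eq_bigr => p _; rewrite !adjmxE row2E.
Qed.

Lemma psdmx_dupmx (X : 'M[C]_n) : psdmx X -> psdmx (dupmx X).
Proof. by move=> hX; have := psdmx_conj (adjmx (row2 1%:M 1%:M)) hX; rewrite adjmxK. Qed.

Definition blk_diff (Y : 'M[C]_(2 * n)) : 'M[C]_n :=
  blk b0 b0 Y - blk b0 b1 Y - blk b1 b0 Y + blk b1 b1 Y.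

Lemma trform_row2_opp (Y : 'M[C]_(2 * n)) (G : 'M[C]_n) :
  trform Y (row2 G (- G)) (row2 G (- G)) = \tr (adjmx G *m G *m blk_diff Y).
Proof.
rewrite -mulmxA mxtrace_mulC -mulmxA /trform row2_mulmx_adj /blk_diff.
rewrite !adjmxN !mulmxN !mulNmx !opprK !mulmxDl !mulmxDr.
rewrite ?mulmxBl ?mulmxBr ?mulmxN ?mulNmx.
by rewrite !mulmxA !mxtraceD ?raddfB ?raddfN /= !mulmxA.
Qed.

End Blocks.

Notation sgnrow := (row2 1%:M (- 1%:M)).

Section BlockDistance.
Variables (C : numClosedFieldType) (n : nat).
Local Notation b1 := (@Ordinal 2 1 isT).

Lemma trform_sgnrow (Y : 'M[C]_(2 * n)) :
  trform Y sgnrow sgnrow = \tr (blk_diff Y).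
Proof. by rewrite trform_row2_opp adjmx1 mul1mx mul1mx. Qed.

Lemma trform_sgnrow_dupmx (X : 'M[C]_n) : trform (dupmx X) sgnrow sgnrow = 0.
Proof. by rewrite trform_sgnrow /blk_diff !blk_dupmx subrr sub0r addNr mxtrace0. Qed.

Lemma trform_sgnrow_ampliate (T : 'M[C]_n -> 'M[C]_n) (Y : 'M[C]_(2 * n)) :
  trace_preserving T -> trform (ampliate T Y) sgnrow sgnrow = trform Y sgnrow sgnrow.
Proof.
by move=> hT; rewrite !trform_sgnrow /blk_diff !blk_ampliate !mxtraceD !raddfN /= !hT.
Qed.

Lemma trform_row2_proj (V : 'M[C]_(2 * n)) (P : 'M[C]_n) :
  adjmx P = P -> P *m P = P ->
  trform V (row2 0 (2 *: P)) (row2 0 (2 *: P)) = 4 * \tr (P *m blk b1 b1 V).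
Proof.
move=> hPa hPP; rewrite /trform row2_mulmx_adj !adjmx0 !mulmx0 !mul0mx !add0r.
rewrite adjmxZ hPa -!scalemxAl -scalemxAr !mxtraceZ mxtrace_mulC mulmxA hPP.
by rewrite rmorph_nat mulrA -natrM.
Qed.

Lemma trform_sgnrow_add_const (V : 'M[C]_(2 * n)) (X Q0 Q1 : 'M[C]_n) :
  (forall a b, blk a b V = X) ->
  trform V (sgnrow + row2 Q0 Q1) (sgnrow + row2 Q0 Q1) =
  trform V (row2 Q0 Q1) (row2 Q0 Q1).
Proof.
move=> hV; rewrite !(trformDl, trformDr) /trform !row2_mulmx_adj !hV.
rewrite ?adjmxN ?adjmx1 ?mulmxN ?mulNmx ?mulmx1 ?mul1mx ?opprK ?mxtraceD ?raddfN.
ring.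
Qed.

End BlockDistance.

Section Oracle.
Variables (C : numClosedFieldType) (N M : nat).
Local Notation n := (N * M).

Definition oracle_sign (x : 'I_N) : 'rV[C]_n :=
  \row_i (-1) ^+ ((@mxtens_unindex N M i).1 == x).

Definition xproj (x : 'I_N) : 'M[C]_n :=
  diag_mx (\row_i ((@mxtens_unindex N M i).1 == x)%:R).

Lemma oracleE x (A : 'M[C]_n) :
  oracle x A = diag_mx (oracle_sign x) *m A *m diag_mx (oracle_sign x).
Proof. by apply/matrixP=> i j; rewrite mul_mx_diag mul_diag_mx !mxE mulrAC. Qed.

Lemma adjmx_oracle_sign x : adjmx (diag_mx (oracle_sign x)) = diag_mx (oracle_sign x).
Proof.
rewrite adjmx_diag; congr diag_mx; apply/matrixP=> i j.
by rewrite !mxE rmorphXn rmorphN1.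
Qed.

Lemma oracle_sign_sqr x : diag_mx (oracle_sign x) *m diag_mx (oracle_sign x) = 1%:M.
Proof.
rewrite mulmx_diag -diag_const_mx; congr diag_mx; apply/matrixP=> i j.
by rewrite !mxE -exprD; case: (_ == x); rewrite ?expr0 // -signr_odd.
Qed.

Lemma oracle_signE x : - diag_mx (oracle_sign x) = - 1%:M + 2 *: xproj x.
Proof.
apply/matrixP=> i j; rewrite !mxE.
case: (_ == x); case: (i == j);
  by rewrite ?mulr1n ?mulr0n ?mulr1 ?mulr0 ?oppr0 ?addr0 //=; ring.
Qed.

Lemma adjmx_xproj x : adjmx (xproj x) = xproj x.
Proof.
rewrite adjmx_diag; congr diag_mx; apply/matrixP=> i j.
by rewrite !mxE rmorph_nat.
Qed.

Lemma xproj_idem x : xproj x *m xproj x = xproj x.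
Proof.
rewrite mulmx_diag; congr diag_mx; apply/matrixP=> i j.
by rewrite !mxE; case: (_ == x); rewrite ?mulr1 ?mulr0.
Qed.

Lemma sum_xproj : \sum_(x < N) xproj x = 1%:M.
Proof.
apply/matrixP=> i j; rewrite summxE !mxE; under eq_bigr => x _ do rewrite !mxE.
rewrite (bigD1 (@mxtens_unindex N M i).1) //= eqxx big1 ?addr0 // => y hy.
by rewrite eq_sym (negbTE hy) mul0rn.
Qed.

Lemma mxtrace_oracle x (A : 'M[C]_n) : \tr (oracle x A) = \tr A.
Proof. by rewrite oracleE mxtrace_mulC mulmxA oracle_sign_sqr mul1mx. Qed.

Lemma oracle_linear x : linear_map (@oracle C N M x).
Proof. by move=> a A B; rewrite !oracleE mulmxDr mulmxDl -scalemxAr -scalemxAl. Qed.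

End Oracle.

Section Hybrid.
Variables (C : numClosedFieldType) (N M : nat).
Local Notation n := (N * M).
Variables (T T' : nat -> 'M[C]_n -> 'M[C]_n).
Hypothesis hT : forall j, channel (T j) /\ channel (T' j).
Local Notation b0 := (@Ordinal 2 0 isT).
Local Notation b1 := (@Ordinal 2 1 isT).

Fixpoint run (O : 'M[C]_n -> 'M[C]_n) (j m : nat) (s : 'M[C]_n) : 'M[C]_n :=
  if m is m'.+1 then T' (j + m') (O (T (j + m') (run O j m' s))) else s.

Definition query_weight (x : 'I_N) j s t := \tr (xproj C M x *m T (j + t) (run id j t s)).

Lemma mxtrace_run O j m s : trace_preserving O -> \tr (run O j m s) = \tr s.
Proof.
move=> hO; elim: m => //= m IH; have [[_ _ tp] [_ _ tp']] := hT (j + m).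
by rewrite tp' hO tp.
Qed.

Lemma coupling_step (x : 'I_N) t (Y : 'M[C]_(2 * n)) : psdmx Y ->
  let V := ampliate (T t) Y in
  exists Y' : 'M[C]_(2 * n),
  [/\ psdmx Y', blk b0 b0 Y' = T' t (oracle x (T t (blk b0 b0 Y))),
      blk b1 b1 Y' = T' t (T t (blk b1 b1 Y)) &
      trform Y' sgnrow sgnrow = trform V (sgnrow + row2 0 (2 *: xproj C M x))
                                         (sgnrow + row2 0 (2 *: xproj C M x))].
Proof.
move=> hY V; have [[_ cpT _] [_ cpT' tpT']] := hT t.
pose W := diag2 (oracle_sign C M x) (const_mx 1).
exists (ampliate (T' t) (W *m V *m adjmx W)); split.
- by apply/cpT'/psdmx_conj/cpT.
- by rewrite blk_ampliate blk_diag2_conj /= blk_ampliate adjmx_oracle_sign oracleE.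
- rewrite blk_ampliate blk_diag2_conj /= blk_ampliate diag_const_mx.
  by rewrite adjmx1 mul1mx mulmx1.
rewrite trform_sgnrow_ampliate // /trform -!mulmxA -adjmxM !mulmxA row2_mul_diag2.
rewrite mul1mx diag_const_mx mulNmx mul1mx.
have -> : row2 (diag_mx (oracle_sign C M x)) (- 1%:M) =
          diag_mx (oracle_sign C M x) *m row2 1%:M (- diag_mx (oracle_sign C M x)).
  by rewrite mulmx_row2 mulmx1 mulmxN oracle_sign_sqr.
rewrite adjmxM adjmx_oracle_sign -!mulmxA mxtrace_mulC -!mulmxA oracle_sign_sqr mulmx1.
have -> : row2 1%:M (- diag_mx (oracle_sign C M x)) = sgnrow + row2 0 (2 *: xproj C M x).
  by rewrite -row2D addr0 oracle_signE.
by rewrite !mulmxA.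
Qed.

(* [Y] couples the oracle run (block 00) with the oracle-free run (block 11);
   [trform Y sgnrow sgnrow] is the squared distance of the two runs. *)
Lemma coupling_run (x : 'I_N) j s0 : psdmx s0 -> forall m, exists Y : 'M[C]_(2 * n),
  [/\ psdmx Y, blk b0 b0 Y = run (oracle x) j m s0, blk b1 b1 Y = run id j m s0 &
      trform Y sgnrow sgnrow <= 4 * m%:R * \sum_(t < m) query_weight x j s0 t].
Proof.
move=> hs; elim=> [|[|m] IH].
- exists (dupmx s0); split; rewrite ?blk_dupmx ?trform_sgnrow_dupmx //.
    exact: psdmx_dupmx.
  by rewrite big_ord0 mulr0.
- have [Y' [hY' e0 e1 ed]] := coupling_step x (j + 0) (psdmx_dupmx hs).
  exists Y'; split; rewrite ?e0 ?e1 ?blk_dupmx //.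
  rewrite ed (@trform_sgnrow_add_const _ _ _ (T (j + 0) s0)) => [|a b]; last first.
    by rewrite blk_ampliate blk_dupmx.
  rewrite trform_row2_proj ?adjmx_xproj ?xproj_idem //.
  by rewrite blk_ampliate blk_dupmx big_ord1 /query_weight mulr1.
have [Y [hY e0 e1 ed]] := IH.
have [Y' [hY' e0' e1' ed']] := coupling_step x (j + m.+1) hY.
exists Y'; split; rewrite ?e0' ?e1' ?e0 ?e1 // ed'.
have [[_ cpT tpT] _] := hT (j + m.+1).
have hl : 0 < (m.+1%:R : C)^-1 by rewrite invr_gt0 ltr0Sn.
apply: le_trans (trform_add_le _ _ (cpT _ _ hY) hl) _.
rewrite trform_sgnrow_ampliate // trform_row2_proj ?adjmx_xproj ?xproj_idem //.
rewrite blk_ampliate e1.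
have hl1 : 0 <= 1 + (m.+1%:R : C)^-1 by rewrite addr_ge0 // ltW.
apply: le_trans (lerD (ler_wpM2l hl1 ed) (lexx _)) _.
rewrite [\sum_(t < m.+2) _]big_ord_recr /= /query_weight invrK le_eqVlt; apply/orP; left.
rewrite -[m.+2]addn1 natrD; apply/eqP.
by field; rewrite addrC natr1 pnatr_eq0.
Qed.

End Hybrid.

Section Success.
Variables (C : numClosedFieldType) (N M : nat).
Local Notation n := (N * M).
Variables (T T' : nat -> 'M[C]_n -> 'M[C]_n).
Hypothesis hT : forall j, channel (T j) /\ channel (T' j).
Local Notation run := (run T T').

Lemma trform_row2_opp_le (Y : 'M[C]_(2 * n)) (G : 'I_N -> 'M[C]_n) x : psdmx Y ->
  \sum_y adjmx (G y) *m G y = 1%:M ->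
  trform Y (row2 (G x) (- G x)) (row2 (G x) (- G x)) <= trform Y sgnrow sgnrow.
Proof.
move=> hY hG.
have -> : trform Y sgnrow sgnrow =
    \sum_y trform Y (row2 (G y) (- G y)) (row2 (G y) (- G y)).
  under eq_bigr => y _ do rewrite trform_row2_opp.
  by rewrite -raddf_sum -mulmx_suml hG mul1mx trform_sgnrow.
rewrite (bigD1 x) //= lerDl; apply: sumr_ge0 => y _; exact: mxtrace_conj_psdmx_ge0.
Qed.

Lemma run_success_le j s0 (E : 'I_N -> 'M[C]_n) : psdmx s0 -> \tr s0 = 1 -> povm E ->
  forall m, (0 < m)%N ->
  \sum_(x < N) \tr (run (oracle x) j m s0 *m E x) <= (1 + 2 * m%:R) ^+ 2.
Proof.
move=> hs htr [hEp hEs] m hm.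
have [F hF] : exists F : 'I_N -> 'M[C]_n, forall x, E x = adjmx (F x) *m F x.
  exact: (@fin_all_exists _ (fun=> 'M[C]_n) (fun x F => E x = adjmx F *m F)
           (fun x => psdmx_factor (hEp x))).
have [Y hY] :=
  @fin_all_exists _ (fun=> 'M[C]_(2 * n)) _ (fun x => coupling_run hT x j hs m).
have hFs : \sum_y adjmx (F y) *m F y = 1%:M.
  by rewrite -hEs; apply: eq_bigr => y _; rewrite hF.
have hl : 0 < (2 * m%:R : C) by rewrite mulr_gt0 // ltr0n.
(* Tr(rho^x E_x) = |F_x psi^x|^2 is split as F_x psi plus F_x (psi^x - psi). *)
have key x : \tr (run (oracle x) j m s0 *m E x) <=
   (1 + 2 * m%:R) * \tr (E x *m run id j m s0) +
   (1 + (2 * m%:R)^-1) * (4 * m%:R * \sum_(t < m) query_weight T T' x j s0 t).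
  have [hY1 e0 e1 ed] := hY x.
  have -> : \tr (run (oracle x) j m s0 *m E x) =
      trform (Y x) (row2 0 (F x) + row2 (F x) (- F x))
                   (row2 0 (F x) + row2 (F x) (- F x)).
    rewrite -row2D add0r addrN /trform row2_mulmx_adj !adjmx0 !mulmx0 !mul0mx !addr0.
    by rewrite -e0 hF mulmxA mxtrace_mulC mulmxA.
  apply: le_trans (trform_add_le _ _ hY1 hl) _; apply: lerD.
    rewrite /trform row2_mulmx_adj !adjmx0 !mulmx0 !mul0mx !add0r e1 hF.
    by rewrite [X in _ <= _ * X]mxtrace_mulC mulmxA mxtrace_mulC mulmxA.
  apply: ler_wpM2l; first by rewrite addr_ge0 // ltW // invr_gt0.
  exact: le_trans (trform_row2_opp_le x hY1 hFs) ed.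
apply: le_trans (ler_sum _ (fun x _ => key x)) _.
rewrite big_split /= -!mulr_sumr.
have -> : \sum_(x < N) \tr (E x *m run id j m s0) = 1.
  by rewrite -raddf_sum -mulmx_suml hEs mul1mx /= mxtrace_run.
have -> : \sum_(x < N) \sum_(t < m) query_weight T T' x j s0 t = m%:R.
  rewrite exchange_big /= (eq_bigr (fun=> 1)) ?sumr_const ?card_ord //.
  move=> t _; rewrite /query_weight -raddf_sum -mulmx_suml sum_xproj mul1mx /=.
  by have [[_ _ tp] _] := hT (j + t); rewrite tp mxtrace_run.
rewrite le_eqVlt; apply/orP; left; apply/eqP.
by field; rewrite pnatr_eq0 -lt0n.
Qed.

End Success.

Section LinearMap.
Variables (C : numClosedFieldType) (n : nat) (f : 'M[C]_n -> 'M[C]_n).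
Hypothesis hf : linear_map f.

Lemma linear_map0 : f 0 = 0.
Proof.
have := hf 1 0 0; rewrite !scale1r addr0 => h.
by apply: (addrI (f 0)); rewrite addr0 -h.
Qed.

Lemma linear_mapD A B : f (A + B) = f A + f B.
Proof. by have := hf 1 A B; rewrite !scale1r. Qed.

Lemma linear_mapZ a A : f (a *: A) = a *: f A.
Proof. by rewrite -[a *: A]addr0 hf linear_map0 addr0. Qed.

Lemma linear_map_sum k (c : 'I_k -> C) (X : 'I_k -> 'M[C]_n) :
  f (\sum_(i < k) c i *: X i) = \sum_(i < k) c i *: f (X i).
Proof.
elim: k c X => [|k IH] c X; first by rewrite !big_ord0 linear_map0.
by rewrite !big_ord_recr /= linear_mapD linear_mapZ IH.
Qed.

End LinearMap.

Section NoiseExpansion.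
Variables (C : numClosedFieldType) (N M : nat).
Local Notation n := (N * M).
Variables (T T' : nat -> 'M[C]_n -> 'M[C]_n).
Hypothesis hT : forall j, channel (T j) /\ channel (T' j).
Local Notation run := (run T T').

Lemma mxtrace_noise (p : C) tau (A : 'M[C]_n) : \tr tau = 1 ->
  \tr (noise p tau A) = \tr A.
Proof. by move=> ht; rewrite /noise mxtraceD !mxtraceZ ht mulr1; ring. Qed.

Lemma mxtrace_evolve (p : C) tau rho0 x k : \tr tau = 1 ->
  \tr (evolve p tau rho0 T T' x k) = \tr rho0.
Proof.
move=> ht; elim: k => //= k IH; have [[_ _ tp] [_ _ tp']] := hT k.
by rewrite tp' mxtrace_oracle tp mxtrace_noise.
Qed.

(* The noise either acts as the identity or resets the state to [tau]; the
   last reset before the end, at step [k - i.+1], happens with weight [p (1-p)^i]. *)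
Lemma evolve_expand (p : C) tau rho0 x k : \tr tau = 1 -> \tr rho0 = 1 ->
  evolve p tau rho0 T T' x k = (1 - p) ^+ k *: run (oracle x) 0 k rho0 +
     \sum_(i < k) (p * (1 - p) ^+ i) *: run (oracle x) (k - i.+1) i.+1 tau.
Proof.
move=> ht hr; elim: k => [|k IH]; first by rewrite /= big_ord0 expr0 scale1r addr0.
pose f A := T' k (oracle x (T k A)).
have hf : linear_map f.
  have [[lT _ _] [lT' _ _]] := hT k.
  by move=> a A B; rewrite /f lT oracle_linear lT'.
have e1 : f tau = run (oracle x) (k.+1 - 1) 1 tau by rewrite subn1 /= addn0.
have e2 (i : 'I_k) :
    f (run (oracle x) (k - i.+1) i.+1 tau) = run (oracle x) (k.+1 - i.+2) i.+2 tau.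
  by rewrite subSS /= subnK.
rewrite -[evolve _ _ _ _ _ _ _]/(f (noise p tau (evolve p tau rho0 T T' x k))).
rewrite /noise mxtrace_evolve // hr scale1r hf (linear_mapZ hf) IH (linear_mapD hf).
rewrite (linear_mapZ hf) (linear_map_sum hf) e1 big_ord_recl expr0 mulr1.
rewrite scalerDr scalerA -exprS; under eq_bigr => i _ do rewrite e2.
rewrite scaler_sumr addrCA; congr (_ + (_ + _)).
by apply: eq_bigr => i _; rewrite scalerA exprS; congr (_ *: _); ring.
Qed.

End NoiseExpansion.

Section HybridWeight.
Variables (F : numFieldType) (p : F).
Hypotheses (hp0 : 0 < p) (hp1 : p <= 1).
Local Notation q := (1 - p).

Definition hybrid_weight k := q ^+ k * (1 + 2 * k%:R) ^+ 2 +
  \sum_(i < k) p * q ^+ i * (1 + 2 * i.+1%:R) ^+ 2.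

Definition geom_moment k := \sum_(i < k) i.+1%:R * q ^+ i.

Definition geom_sum k := \sum_(i < k) q ^+ i.

Lemma hybrid_weightE k : hybrid_weight k = 1 + 8 * geom_moment k.
Proof.
elim: k => [|k IH].
  by rewrite /hybrid_weight /geom_moment !big_ord0 expr0 mul1r !(mulr0, addr0) expr1n.
have -> : hybrid_weight k.+1 = hybrid_weight k + q ^+ k * (8 * k.+1%:R).
  rewrite /hybrid_weight big_ord_recr /= exprS -!natr1. ring.
by rewrite IH /geom_moment big_ord_recr /=; ring.
Qed.

Lemma geom_momentE k : p ^+ 2 * geom_moment k = 1 - q ^+ k * (1 + k%:R * p).
Proof.
elim: k => [|k IH].
  by rewrite /geom_moment big_ord0 mulr0 expr0 mul0r addr0 mul1r subrr.
rewrite /geom_moment big_ord_recr /= mulrDr -/(geom_moment k) IH.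
by rewrite [_ ^+ k.+1]exprS -!natr1; ring.
Qed.

Lemma geom_sumE k : p * geom_sum k = 1 - q ^+ k.
Proof.
elim: k => [|k IH]; first by rewrite /geom_sum big_ord0 mulr0 expr0 subrr.
by rewrite /geom_sum big_ord_recr /= mulrDr -/(geom_sum k) IH exprS; ring.
Qed.

Let q_ge0 : 0 <= q. Proof. by rewrite subr_ge0. Qed.

Lemma hybrid_weight_le_inv_sqr k : hybrid_weight k <= 1 + 8 / p ^+ 2.
Proof.
rewrite hybrid_weightE lerD2l ler_pM2l // -[(p ^+ 2)^-1]mulr1.
rewrite ler_pdivlMl ?exprn_gt0 // geom_momentE gerBl.
by rewrite mulr_ge0 ?exprn_ge0 ?q_ge0 // addr_ge0 // mulr_ge0 // ltW.
Qed.

Lemma hybrid_weight_le_inv k : hybrid_weight k <= 8 * (k%:R + 1) / p.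
Proof.
have hpm : p * geom_moment k <= k%:R.
  have hm : geom_moment k <= k%:R * geom_sum k.
    rewrite /geom_moment /geom_sum mulr_sumr; apply: ler_sum => i _.
    by apply: ler_wpM2r; rewrite ?exprn_ge0 ?q_ge0 ?ler_nat.
  apply: le_trans (ler_wpM2l (ltW hp0) hm) _.
  rewrite mulrCA -[leRHS]mulr1; apply: ler_wpM2l => //.
  by rewrite geom_sumE gerBl exprn_ge0 // q_ge0.
rewrite hybrid_weightE ler_pdivlMr //.
have -> : (1 + 8 * geom_moment k) * p = p + 8 * (p * geom_moment k) by ring.
rewrite mulrDr mulr1 addrC lerD ?ler_pM2l //.
by apply: le_trans hp1 _; rewrite ler1n.
Qed.

End HybridWeight.

Lemma channel_id (C : numClosedFieldType) n : channel (fun A : 'M[C]_n => A).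
Proof.
split=> // k X hX; suff -> : ampliate (fun A : 'M[C]_n => A) X = X by [].
by apply/matrixP=> i j; rewrite /ampliate !mxE !mxtens_unindexK.
Qed.

Lemma eq_evolve (C : numClosedFieldType) N M (p : C) (tau rho0 : 'M[C]_(N * M))
    (T T' T2 T2' : nat -> 'M[C]_(N * M) -> 'M[C]_(N * M)) x k :
  (forall j, (j < k)%N -> T j = T2 j /\ T' j = T2' j) ->
  evolve p tau rho0 T T' x k = evolve p tau rho0 T2 T2' x k.
Proof.
elim: k => //= k IH eqT; have [-> ->] := eqT k (ltnSn k).
by rewrite IH // => j hj; apply/eqT/ltnW.
Qed.

Lemma evolve_success_le (C : numClosedFieldType) N M (p : C) (tau rho0 : 'M[C]_(N * M))
    (T T' : nat -> 'M[C]_(N * M) -> 'M[C]_(N * M)) (E : 'I_N -> 'M[C]_(N * M)) k :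
  density rho0 -> density tau -> povm E -> 0 <= p -> p <= 1 -> (0 < k)%N ->
  (forall j, (j < k)%N -> channel (T j) /\ channel (T' j)) ->
  \sum_(x < N) \tr (evolve p tau rho0 T T' x k *m E x) <= hybrid_weight p k.
Proof.
move=> [hr0 tr0] [htau trtau] hE hp0 hp1 hk hch.
pose ext (S : nat -> 'M[C]_(N * M) -> 'M[C]_(N * M)) j :=
  if (j < k)%N then S j else fun A => A.
have hT j : channel (ext T j) /\ channel (ext T' j).
  by rewrite /ext; case: ifP => hj; [exact: hch | split; exact: channel_id].
have hq : 0 <= 1 - p by rewrite subr_ge0.
set run' := run (ext T) (ext T').
have -> : \sum_(x < N) \tr (evolve p tau rho0 T T' x k *m E x) =
    (1 - p) ^+ k * \sum_(x < N) \tr (run' (oracle x) 0 k rho0 *m E x) +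
    \sum_(i < k) p * (1 - p) ^+ i *
      \sum_(x < N) \tr (run' (oracle x) (k - i.+1)%N i.+1 tau *m E x).
  rewrite [in RHS]mulr_sumr; under [X in _ = _ + X]eq_bigr => i _ do rewrite mulr_sumr.
  rewrite [X in _ = _ + X]exchange_big /= -big_split /=; apply: eq_bigr => x _.
  rewrite (@eq_evolve _ _ _ _ _ _ _ _ (ext T) (ext T')) => [|j hj]; last first.
    by rewrite /ext hj.
  rewrite (evolve_expand hT) // mulmxDl mxtraceD -scalemxAl mxtraceZ mulmx_suml raddf_sum.
  by congr (_ + _); apply: eq_bigr => i _; rewrite -scalemxAl; apply: mxtraceZ.
rewrite /hybrid_weight; apply: lerD.
  by apply: ler_wpM2l; [exact: exprn_ge0 | exact: run_success_le].
apply: ler_sum => i _; apply: ler_wpM2l; first by rewrite mulr_ge0 // exprn_ge0.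
exact: run_success_le.
Qed.

Unset Implicit Arguments.

Theorem theorem1 (R : rcfType) (N M : nat) (hN : (1 <= N)%N) (hM : (1 <= M)%N)
  (rho0 tau : 'M[R[i]]_(N * M)) (p : R) (k : nat) (hk : (1 <= k)%N)
  (T T' : nat -> 'M[R[i]]_(N * M) -> 'M[R[i]]_(N * M))
  (E : 'I_N -> 'M[R[i]]_(N * M)) :
  density rho0 -> density tau ->
  0 < p -> p <= 1 ->
  (forall j, (j < k)%N -> channel (T j) /\ channel (T' j)) ->
  povm E ->
  let ps := success_prob (p%:C)%C tau rho0 T T' k E in
  ps <= (N%:R^-1 + 8 / (N%:R * (p%:C)%C ^+ 2))
  /\ ps <= 8 * (k%:R + 1) / (N%:R * (p%:C)%C).
Proof.
move=> hr ht hp0 hp1 hch hE ps.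
have hpc0 : 0 < (p%:C)%C by rewrite ltcR.
have hpc1 : (p%:C)%C <= 1 by rewrite lecR.
have hN0 : 0 < (N%:R : R[i]) by rewrite ltr0n.
have hps : ps <= N%:R^-1 * hybrid_weight (p%:C)%C k.
  rewrite /ps /success_prob -mulr_sumr ler_wpM2l ?invr_ge0 ?ler0n //.
  exact: evolve_success_le (ltW hpc0) hpc1 hk hch.
split; apply: le_trans hps _.
  have -> : N%:R^-1 + 8 / (N%:R * (p%:C)%C ^+ 2) = N%:R^-1 * (1 + 8 / (p%:C)%C ^+ 2).
    by field; rewrite !gt_eqF.
  by rewrite ler_pM2l ?invr_gt0 // hybrid_weight_le_inv_sqr.
have -> : 8 * (k%:R + 1) / (N%:R * (p%:C)%C) = N%:R^-1 * (8 * (k%:R + 1) / (p%:C)%C).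
  by field; rewrite !gt_eqF.
by rewrite ler_pM2l ?invr_gt0 // hybrid_weight_le_inv.
Qed.
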